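(* Let $\mathcal{P}=\{1,\dots,M\}$, $i\in\mathcal{P}$, $i'\notin\mathcal{P}$, $\mathcal{P}^R=\mathcal{P}\cup\{i'\}$. Let $g\colon2^{\mathcal{P}^R}\to\mathbb{R}_{\ge0}$ be monotone, supermodular, and replication-invariant ($g(T\cup\{i,i'\})=g(T\cup\{i\})=g(T\cup\{i'\})$ for all $T\subseteq\mathcal{P}^R$), with $g(\mathcal{P})>0$. Let $v(S)=g(S)+\sum_{j\in S}(g(S)-g(\{j\}))$ for $S\subseteq\mathcal{P}^R$, let $a_j=g(\mathcal{P})-g(\{j\})$ for $j\in\mathcal{P}$, and $A=\sum_{j\in\mathcal{P}}a_j$; assume $A>0$. Let $\phi(i)$ be the normalized Shapley value of $i$ for $v$ restricted to $2^{\mathcal{P}}$ and $\phi^R(i)$ the normalized Shapley value of $i$ for $v$ on $2^{\mathcal{P}^R}$. Then $$\phi^R(i)\le\frac{\phi(i)A+a_i}{2(A+a_i)},$$ i.e. the combined payoff $t^R=2(\phi^R(i)(A+a_i)-a_i)$ of $i$ and its replica does not exceed $i$'s payoff $t=\phi(i)A-a_i$ in the original market.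
   Context: Normalized Shapley values: $\phi(i)=\frac{1}{v(\mathcal{P})}\sum_{S\subseteq\mathcal{P}\setminus\{i\}}\frac{|S|!(M-|S|-1)!}{M!}\big(v(S\cup\{i\})-v(S)\big)$ and $\phi^R(i)=\frac{1}{v(\mathcal{P}^R)}\sum_{S\subseteq\mathcal{P}^R\setminus\{i\}}\frac{|S|!(M-|S|)!}{(M+1)!}\big(v(S\cup\{i\})-v(S)\big)$. Market setting: all parties share one validation set $V$; $g(S)$ is the performance on $V$ of the model trained on the pooled data of $S$; $a_j$ is party $j$'s gain from the market; party $j$ receives payout $A\,\phi(j)$ and pays $a_j$. The replica $i'$ has the same data as $i$. *)

From HB Require Import structures.
From mathcomp Require Import all_boot all_order all_algebra.
Set Implicit Arguments. Unset Strict Implicit. Unset Printing Implicit Defensive.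
Import Order.TTheory GRing.Theory Num.Theory.
Local Open Scope ring_scope.

Definition shapley_norm (R : realFieldType) (T : finType)
  (v : {set T} -> R) (N : {set T}) (i : T) : R :=
  (v N)^-1 * \sum_(S in powerset (N :\ i))
     ((#|S|`! * (#|N| - #|S| - 1)`!)%:R / (#|N|`!)%:R) * (v (S :|: [set i]) - v S).

Definition set_monotone (R : realFieldType) (T : finType) (g : {set T} -> R) :=
  forall S U : {set T}, S \subset U -> g S <= g U.

Definition supermodular (R : realFieldType) (T : finType) (g : {set T} -> R) :=
  forall S U : {set T}, g S + g U <= g (S :|: U) + g (S :&: U).

Definition market_v (R : realFieldType) (T : finType) (g : {set T} -> R)
  (S : {set T}) : R :=
  g S + \sum_(j in S) (g S - g [set j]).

(* Supermodularity and replication invariance make both the party i and its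
   replica i' null players of g: g(U+i) + g(U+i') <= g(U+i+i') + g(U) =
   g(U+i) + g(U), so g(U+i') <= g(U), and monotonicity gives equality.  Hence
   the marginal contribution of i to a coalition S in the market game v is
   g(S) - g(∅), whether or not i' is in S, and by the Pascal rule for Shapley
   weights the unnormalized Shapley value X of i is the same with or without
   the replica.  Only the normalizer changes, from v(P) = g(P) + A to
   v(P^R) = g(P) + A + a_i; as X is a convex combination of values
   g(S) - g(∅) in [0, a_i], the claim is a rational inequality in
   g(P), A, a_i and X. *)

From HB Require Import structures.
From mathcomp Require Import all_boot all_order all_algebra.
From mathcomp Require Import ring lra zify.
Set Implicit Arguments. Unset Strict Implicit. Unset Printing Implicit Defensive.
Import Order.TTheory GRing.Theory Num.Theory.
Local Open Scope ring_scope.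

Section ReplicaNull.

Variables (R : realFieldType) (T : finType) (g : {set T} -> R) (x y : T).
Hypotheses (g_mono : set_monotone g) (g_super : supermodular g) (neq_xy : x != y).
Hypothesis replica_pair : forall U, g (U :|: [set x; y]) = g (U :|: [set x]).
Hypothesis replica_swap : forall U, g (U :|: [set x]) = g (U :|: [set y]).

(* Supermodularity at [U + x] and [U + y], with [replica_pair], gives
   [g (U + y) <= g U]. *)
Lemma replica_pair_null U : g (U :|: [set x; y]) = g U.
Proof.
have := g_super (U :|: [set x]) (U :|: [set y]).
rewrite setUACA setUid -setUIr.
have /eqP -> : [set x] :&: [set y] == set0.
  by rewrite setI_eq0 disjoints1 inE.
rewrite setU0 replica_pair -replica_swap => le_gxy.
have : g U <= g (U :|: [set x]) by apply: g_mono; rewrite subsetUl.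
lra.
Qed.

Lemma replica_null_l S : g (S :|: [set x]) = g S.
Proof.
apply/eqP; rewrite eq_le; apply/andP; split; last exact/g_mono/subsetUl.
rewrite -[leRHS](replica_pair_null S); apply: g_mono.
by rewrite setUS // subsetUl.
Qed.

Lemma replica_null_r S : g (S :|: [set y]) = g S.
Proof. by rewrite -replica_swap replica_null_l. Qed.

End ReplicaNull.

Definition shapley_weight (R : realFieldType) (n s : nat) : R :=
  (s`! * (n - s - 1)`!)%:R / (n`!)%:R.

Lemma shapley_weight_ge0 (R : realFieldType) n s : 0 <= shapley_weight R n s.
Proof. by rewrite divr_ge0 ?ler0n. Qed.

(* With [n = s + k + 1]: [s! (k+1)! + (s+1)! k! = s! k! (n+1)]. *)
Lemma shapley_weightSS (R : realFieldType) n s : (s < n)%N ->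
  shapley_weight R n.+1 s + shapley_weight R n.+1 s.+1 = shapley_weight R n s.
Proof.
move=> lt_sn; rewrite /shapley_weight.
have -> : n = (s + (n - s - 1)).+1 by lia.
set k := (n - s - 1)%N.
have -> : ((s + k).+2 - s - 1 = k.+1)%N by lia.
have -> : ((s + k).+2 - s.+1 - 1 = k)%N by lia.
rewrite (factS k) (factS s) (factS (s + k).+1).
have fn0 : (s + k).+1`!%:R != 0 :> R by rewrite pnatr_eq0 -lt0n fact_gt0.
move: fn0; move: (s`!) (k`!) ((s + k).+1`!) => fs fk fn fn0.
rewrite !natrM.
by field; rewrite fn0 -!natrD pnatr_eq0.
Qed.

Lemma big_powersetU1 (T : finType) (V : nmodType) (x : T) (B : {set T})
    (F : {set T} -> V) : x \notin B ->
  \sum_(S in powerset (x |: B)) F S = \sum_(S in powerset B) (F S + F (x |: S)).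
Proof.
move=> xNB; have xNS (S : {set T}) : S \subset B -> x \notin S.
  by move=> sSB; apply: contraNN xNB; apply: (subsetP sSB).
rewrite big_split (bigID [pred S : {set T} | x \in S]) /= addrC; congr (_ + _).
  apply: eq_bigl => S; rewrite !powersetE; apply/andP/idP => [[sSxB xNS']|sSB].
    apply/subsetP => z zS; move/subsetP/(_ z zS): sSxB.
    by rewrite in_setU1 => /predU1P[zx|//]; rewrite -zx zS in xNS'.
  by rewrite (subset_trans sSB) ?subsetUr ?xNS.
rewrite (reindex_onto (fun S => x |: S) (fun S => S :\ x)) /=; last first.
  by move=> S /andP[_ xS]; rewrite setD1K.
apply: eq_bigl => S; rewrite !powersetE setU11 andbT.
apply/andP/idP => [[sSxB /eqP <-]|sSB]; first by rewrite subDset.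
by rewrite setUS // setU1K ?xNS.
Qed.

Section ShapleySums.

Variables (R : realFieldType) (T : finType).

Lemma shapley_sum_dummy (y : T) (B : {set T}) (f : {set T} -> R) :
  y \notin B -> (forall S, f (y |: S) = f S) ->
  \sum_(S in powerset (y |: B)) shapley_weight R #|y |: B|.+1 #|S| * f S =
  \sum_(S in powerset B) shapley_weight R #|B|.+1 #|S| * f S.
Proof.
move=> yNB fy; rewrite big_powersetU1 //; apply: eq_bigr => S; rewrite powersetE => sSB.
have yNS : y \notin S by apply: contraNN yNB; apply: (subsetP sSB).
rewrite fy -mulrDl !cardsU1 yNB yNS add1n shapley_weightSS //.
by rewrite ltnS subset_leq_card.
Qed.

Lemma sum_shapley_weight (B : {set T}) :
  \sum_(S in powerset B) shapley_weight R #|B|.+1 #|S| = 1.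
Proof.
elim: {B}#|B| {-2}B (erefl #|B|) => [|n IH] B cardB.
  move/eqP: cardB; rewrite cards_eq0 => /eqP ->.
  by rewrite powerset0 big_set1 cards0 /shapley_weight divr1.
have /card_gt0P[x xB] : (0 < #|B|)%N by rewrite cardB.
have xNBx : x \notin B :\ x by rewrite setD11.
have := shapley_sum_dummy (f := fun=> 1) xNBx (fun=> erefl).
rewrite (setD1K xB) !(eq_bigr _ (fun S _ => mulr1 _)) => ->.
by rewrite IH //; move: cardB; rewrite (cardsD1 x) xB => -[].
Qed.

Lemma shapley_sum_le (B : {set T}) (f : {set T} -> R) (c : R) :
  (forall S : {set T}, S \subset B -> f S <= c) ->
  \sum_(S in powerset B) shapley_weight R #|B|.+1 #|S| * f S <= c.
Proof.
move=> f_le; rewrite -[leRHS]mul1r -(sum_shapley_weight B) mulr_suml.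
apply: ler_sum => S; rewrite powersetE => sSB.
by rewrite ler_wpM2l ?shapley_weight_ge0 ?f_le.
Qed.

End ShapleySums.

Section MarketGame.

Variables (R : realFieldType) (T : finType) (g : {set T} -> R) (x : T).
Hypothesis g_null : forall S, g (S :|: [set x]) = g S.

Lemma null_set1 : g [set x] = g set0.
Proof. by rewrite -[[set x]]set0U g_null. Qed.

Lemma market_v_marginal_null (S : {set T}) : x \notin S ->
  market_v g (S :|: [set x]) - market_v g S = g S - g set0.
Proof.
move=> xNS; rewrite /market_v setUC big_setU1 //= -setUC g_null null_set1.
by rewrite addrCA addrK.
Qed.

Lemma market_v_setU1_null (N : {set T}) : x \notin N ->
  market_v g (x |: N) = market_v g N + (g N - g set0).
Proof.
move=> xNN; rewrite /market_v big_setU1 //= setUC g_null null_set1.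
by rewrite (addrC (g N - _)) addrA.
Qed.

Lemma shapley_norm_market_null (N : {set T}) :
  shapley_norm (market_v g) N x = (market_v g N)^-1 *
    \sum_(S in powerset (N :\ x)) shapley_weight R #|N| #|S| * (g S - g set0).
Proof.
congr (_ * _); apply: eq_bigr => S; rewrite powersetE => sSN.
by rewrite market_v_marginal_null //; apply/negP => /(subsetP sSN); rewrite setD11.
Qed.

End MarketGame.

Lemma replica_shapley_bound (R : realFieldType) (A G c X : R) :
  0 < A -> 0 <= c <= G -> 0 <= X <= c ->
  (G + A + c)^-1 * X <= ((G + A)^-1 * X * A + c) / (2 * (A + c)).
Proof.
move=> A_gt0 /andP[c_ge0 c_leG] /andP[X_ge0 X_lec]; rewrite -subr_ge0.
have -> : ((G + A)^-1 * X * A + c) / (2 * (A + c)) - (G + A + c)^-1 * X =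
    ((c - X) * (G + A) * (G + A + c) + X * G * (G - c + A)) /
    ((G + A) * (G + A + c) * (2 * (A + c))).
  by field; rewrite !lt0r_neq0 //; lra.
apply: divr_ge0; last by rewrite !mulr_ge0 //; lra.
by rewrite addr_ge0 // !mulr_ge0 //; lra.
Qed.

Theorem theorem1 (R : realFieldType) (M : nat) (i : 'I_M)
  (g : {set option 'I_M} -> R)
  (g_nonneg : forall S, 0 <= g S)
  (g_mono : set_monotone g)
  (g_super : supermodular g)
  (g_repl1 : forall U : {set option 'I_M},
      g (U :|: [set Some i; None]) = g (U :|: [set Some i]))
  (g_repl2 : forall U : {set option 'I_M},
      g (U :|: [set Some i]) = g (U :|: [set None]))
  (gP_pos : 0 < g [set Some j | j : 'I_M]) :
  let P : {set option 'I_M} := [set Some j | j : 'I_M] in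
  let PR : {set option 'I_M} := [set: option 'I_M] in
  let v := market_v g in
  let a := fun j : option 'I_M => g P - g [set j] in
  let A := \sum_(j in P) a j in
  0 < A ->
  shapley_norm v PR (Some i) <=
    (shapley_norm v P (Some i) * A + a (Some i)) / (2%:R * (A + a (Some i))).
Proof.
move=> P PR v a A A_gt0.
have neq_iN : Some i != None by [].
have null_i := replica_null_l g_mono g_super neq_iN g_repl1 g_repl2.
have null_N := replica_null_r g_mono g_super neq_iN g_repl1 g_repl2.
set B := P :\ Some i.
have inP j : Some j \in P by apply: imset_f.
have NNP : None \notin P by apply/imsetP => -[].
have NNB : None \notin B by rewrite in_setD1 (negPf NNP) andbF.
have PR_P : PR = None |: P by apply/setP => -[j|]; rewrite !inE ?inP.
have PR_i : PR :\ Some i = None |: B by apply/setP => -[j|]; rewrite !inE ?inP.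
have card_P : #|P| = #|B|.+1 by rewrite (cardsD1 (Some i)) inP.
have card_PR : #|PR| = #|None |: B|.+1 by rewrite -PR_i [LHS](cardsD1 (Some i)) inE.
have ai : a (Some i) = g P - g set0 by rewrite /a (null_set1 null_i).
rewrite !(shapley_norm_market_null null_i) card_P card_PR PR_i.
rewrite shapley_sum_dummy //; last by move=> S; rewrite setUC null_N.
rewrite -/B PR_P (market_v_setU1_null null_N) // -[market_v g P]/(g P + A) ai.
have g_set0_le S : g set0 <= g S by apply: g_mono; rewrite sub0set.
apply: replica_shapley_bound => //.
  by have := g_nonneg set0; have := g_set0_le P; lra.
apply/andP; split.
  by apply: sumr_ge0 => S _; rewrite mulr_ge0 ?shapley_weight_ge0 ?subr_ge0.
apply: shapley_sum_le => S sSB; rewrite lerB //; apply: g_mono.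
by rewrite (subset_trans sSB) ?subD1set.
Qed.
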